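(* Let $n \ge 0$ and let $Z = \sum_{j=1}^m P_j$ be a point cluster of degree $m$ in $\mathbb{P}^n(\mathbb{C})$. Fix row vectors $P_j \in \mathbb{C}^{n+1}$ representing the points of $Z$ with $\|P_j\|^2 = \bar{P}_j P_j^\top = 1$. Then there is a constant $c > 0$ such that for every positive definite Hermitian $(n+1)\times(n+1)$ matrix $Q$ with eigenvalues $0 < \lambda_0 \le \lambda_1 \le \dots \le \lambda_n$ we have \[ \prod_{j=1}^m \bigl(\bar{P}_j Q P_j^\top\bigr) \ge c \prod_{k=0}^n \lambda_k^{\varphi_Z(k) - \varphi_Z(k-1)}. \]
   Context: A point cluster (positive zero-cycle) of degree $m$ in $\mathbb{P}^n$ is a formal sum $Z = \sum_{j=1}^m P_j$ of (not necessarily distinct) points $P_j \in \mathbb{P}^n$. For a linear subspace $L \subseteq \mathbb{P}^n$, $Z|_L$ denotes the sum of those points of $Z$ lying in $L$ (counted with multiplicity), and $\deg$ is the number of points. For $-1 \le k \le n$, $\varphi_Z(k) = \max\{\deg Z|_L : L \subseteq \mathbb{P}^n \text{ a } k\text{-dimensional linear subspace}\}$ (the $(-1)$-dimensional subspace being empty, so $\varphi_Z(-1) = 0$). Points are written as row vectors, $\bar{P}$ denotes complex conjugation. *)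

From HB Require Import structures.
From mathcomp Require Import all_boot all_order all_algebra.
From mathcomp Require Import boolp.
From mathcomp Require Import reals.
From mathcomp Require Import complex.
Set Implicit Arguments. Unset Strict Implicit. Unset Printing Implicit Defensive.
Import Order.TTheory GRing.Theory Num.Theory.
Local Open Scope ring_scope.

Definition degZL (C : fieldType) (n m : nat) (P : 'I_m -> 'rV[C]_n.+1)
    (L : 'M[C]_n.+1) : nat :=
  #|[set j : 'I_m | (P j <= L)%MS]|.

(* phiv P d = max { deg Z|_L : L a vector subspace of dimension d }
            = phi_Z(d - 1)  (a projective k-plane is a (k+1)-dim vector
            subspace; phiv P 0 = phi_Z(-1)). The maximum is over values
            in 0..m, which bound deg Z|_L. *)
Definition phiv (C : fieldType) (n m : nat) (P : 'I_m -> 'rV[C]_n.+1)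
    (d : nat) : nat :=
  \max_(i < m.+1 | `[< exists L : 'M[C]_n.+1,
                        \rank L = d /\ degZL P L = i >]) (i : nat).

Definition herm_form (R : rcfType) (n : nat) (Q : 'M[R[i]]_n.+1)
    (v : 'rV[R[i]]_n.+1) : R[i] :=
  (map_mx Num.conj v *m Q *m v^T) 0 0.

From HB Require Import structures.
From mathcomp Require Import all_boot all_order all_algebra.
From mathcomp Require Import boolp reals complex.
From mathcomp Require Import fingroup perm spectral.
From mathcomp Require Import zify ring.
Import Order.TTheory GRing.Theory Num.Theory.
Local Open Scope ring_scope.
Set Implicit Arguments. Unset Strict Implicit. Unset Printing Implicit Defensive.

(* Diagonalize Q = N^* diag(lam) N with increasing eigenvalues, so that
   conj(P_j) Q P_j^T = \sum_k lam_k |y_jk|^2 for the unit vector y_j = P_j N^T.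
   For a small delta > 0 depending only on Z, let t_j be the first index after
   which the tail \sum_(k > t_j) |y_jk|^2 is below delta; then
   conj(P_j) Q P_j^T >= delta lam_(t_j).  The points with t_j <= k are
   delta-close to the span of the first k + 1 eigenvectors, and a quantitative
   form of linear independence (uniform bounds on the pseudo-inverses of the
   free subfamilies of Z) shows that at most phi_Z(k) points are.  As the
   lam_k increase, this majorization gives
   \prod_j lam_(t_j) >= \prod_k lam_k ^ (phi_Z(k) - phi_Z(k - 1)). *)

Section SquaredNorms.
Variable C : numClosedFieldType.

Definition sqnorm p (x : 'rV[C]_p) : C := \sum_i `|x 0 i| ^+ 2.

Definition tail p (x : 'rV[C]_p) (k : nat) : C :=
  \sum_(i < p | (k <= i)%N) `|x 0 i| ^+ 2.

Definition frobenius p q (B : 'M[C]_(p, q)) : C := \sum_i \sum_j `|B i j| ^+ 2.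

Lemma sqnormE p (x : 'rV[C]_p) : sqnorm x = (map_mx Num.conj x *m x^T) 0 0.
Proof. by rewrite mxE; apply: eq_bigr => i _; rewrite !mxE normCK mulrC. Qed.

Lemma sqnorm_ge0 p (x : 'rV[C]_p) : 0 <= sqnorm x.
Proof. by apply: sumr_ge0 => i _; apply: exprn_ge0. Qed.

Lemma sqnorm_eq0 p (x : 'rV[C]_p) : (sqnorm x == 0) = (x == 0).
Proof.
apply/idP/eqP => [/eqP x0 | ->].
  have ge0 i : true -> 0 <= `|x 0 i| ^+ 2 by move=> _; apply: exprn_ge0.
  apply/rowP => i; move: x0 => /(psumr_eq0P ge0)/(_ i isT)/eqP.
  by rewrite mxE expf_eq0 /= normr_eq0 => /eqP.
by rewrite /sqnorm big1 // => i _; rewrite mxE normr0 expr0n.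
Qed.

Lemma tail_ge0 p (x : 'rV[C]_p) k : 0 <= tail x k.
Proof. by apply: sumr_ge0 => i _; apply: exprn_ge0. Qed.

Lemma tail0 p (x : 'rV[C]_p) : tail x 0 = sqnorm x.
Proof. by []. Qed.

Lemma tail_size p (x : 'rV[C]_p) : tail x p = 0.
Proof. by rewrite /tail big_pred0 // => i; rewrite leqNgt ltn_ord. Qed.

Lemma tail_decr p (x : 'rV[C]_p) k1 k2 : (k1 <= k2)%N -> tail x k2 <= tail x k1.
Proof.
move=> le_k; rewrite [leRHS](bigID (fun i : 'I_p => (k2 <= i)%N)) /=.
rewrite [X in _ <= X + _](eq_bigl (fun i : 'I_p => (k2 <= i)%N)) => [|i].
  by rewrite lerDl sumr_ge0 // => i _; apply: exprn_ge0.
by rewrite andbC; case: leqP => //= /(leq_trans le_k) ->.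
Qed.

Lemma frobenius_ge0 p q (B : 'M[C]_(p, q)) : 0 <= frobenius B.
Proof. by apply: sumr_ge0 => i _; apply: sumr_ge0 => j _; apply: exprn_ge0. Qed.

Lemma normD_sqr_le (a b : C) : `|a + b| ^+ 2 <= 2 * `|a| ^+ 2 + 2 * `|b| ^+ 2.
Proof.
have -> : 2 * `|a| ^+ 2 + 2 * `|b| ^+ 2 = `|a + b| ^+ 2 + `|a - b| ^+ 2.
  by rewrite !normCK !rmorphD !rmorphN /=; ring.
by rewrite lerDl exprn_ge0.
Qed.

(* Weaker than Cauchy-Schwarz, but any constant depending only on [p] will do. *)
Lemma norm_sum_sqr_le p (z : 'I_p -> C) :
  `|\sum_i z i| ^+ 2 <= 2 ^+ p * \sum_i `|z i| ^+ 2.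
Proof.
elim: p z => [|p IH] z; first by rewrite !big_ord0 normr0 expr0n /= mul1r.
rewrite !big_ord_recl mulrDr; apply: le_trans (normD_sqr_le _ _) _.
apply: lerD; last by rewrite [2 ^+ p.+1]exprS -mulrA ler_wpM2l ?IH.
apply: ler_wpM2r; first exact: exprn_ge0.
by rewrite [2 ^+ p.+1]exprS ler_peMr // exprn_ege1 // ler1n.
Qed.

Lemma sum_sqr_mulmx_le p q (J : pred 'I_q) (x : 'rV[C]_p) (B : 'M[C]_(p, q)) :
  \sum_(i | J i) `|(x *m B) 0 i| ^+ 2
    <= 2 ^+ p * \sum_l `|x 0 l| ^+ 2 * \sum_(i | J i) `|B l i| ^+ 2.
Proof.
under eq_bigr do rewrite mxE.
apply: le_trans (ler_sum _ (fun i _ => norm_sum_sqr_le _)) _.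
rewrite -mulr_sumr ler_wpM2l ?exprn_ge0 // exchange_big ler_sum //= => l _.
by rewrite mulr_sumr ler_sum // => i _; rewrite normrM exprMn.
Qed.

Lemma sqnorm_mulmx_le p q (x : 'rV[C]_p) (B : 'M[C]_(p, q)) :
  sqnorm (x *m B) <= 2 ^+ p * sqnorm x * frobenius B.
Proof.
apply: le_trans (sum_sqr_mulmx_le predT x B) _.
rewrite -mulrA ler_wpM2l ?exprn_ge0 // /sqnorm mulr_suml ler_sum // => l _.
rewrite ler_wpM2l ?exprn_ge0 // /frobenius (bigD1 l) //= lerDl.
by apply: sumr_ge0 => i _; apply: sumr_ge0 => j _; apply: exprn_ge0.
Qed.

Lemma weighted_sum_ge_tail p (lam : 'I_p -> C) (y : 'rV[C]_p) (t : 'I_p) :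
    (forall i, 0 <= lam i) -> (forall i j : 'I_p, (i <= j)%N -> lam i <= lam j) ->
  lam t * tail y t <= \sum_i lam i * `|y 0 i| ^+ 2.
Proof.
move=> lam_ge0 lam_incr; rewrite mulr_sumr big_mkcond ler_sum // => i _.
case: ifP => [/lam_incr le_ti | _]; first by rewrite ler_wpM2r ?exprn_ge0.
by rewrite mulr_ge0 ?exprn_ge0.
Qed.

End SquaredNorms.

Lemma char_poly_similar (F : fieldType) n (M A : 'M[F]_n) : M \in unitmx ->
  char_poly (invmx M *m A *m M) = char_poly A.
Proof.
move=> Mu; rewrite /char_poly /char_poly_mx; set M' := map_mx polyC M.
have M'u : M' \in unitmx by rewrite map_unitmx.
have -> : 'X%:M - map_mx polyC (invmx M *m A *m M)
          = invmx M' *m ('X%:M - map_mx polyC A) *m M'.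
  rewrite !map_mxM map_invmx -/M' mulmxBr mulmxBl; congr (_ - _).
  by rewrite -mulmxA -scalar_mxC mulmxA mulVmx ?mul1mx.
by rewrite !det_mulmx det_inv mulrC mulrA mulrV ?mul1r.
Qed.

Section HermitianForms.
Variable C : numClosedFieldType.
Local Open Scope sesquilinear_scope.

Lemma sqnorm_unitarymx n (M : 'M[C]_n) (x : 'rV[C]_n) :
  M \is unitarymx -> sqnorm (x *m M^T) = sqnorm x.
Proof.
move=> /unitarymxP MMt; have MtM : M^t* *m M = 1%:M by apply: mulmx1C.
by rewrite !sqnormE map_mxM trmx_mul -mulmxA [X in _ *m X]mulmxA trmxK MtM mul1mx.
Qed.

Lemma diag_form n (d : 'rV[C]_n) (y : 'rV[C]_n) :
  (map_mx Num.conj y *m diag_mx d *m y^T) 0 0 = \sum_k d 0 k * `|y 0 k| ^+ 2.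
Proof.
rewrite mul_mx_diag mxE; apply: eq_bigr => k _.
by rewrite !mxE normCK; ring.
Qed.

Lemma hermitian_eigen_coords n (Q : 'M[C]_n.+1) (lam : 'I_n.+1 -> C) :
    map_mx Num.conj Q^T = Q ->
    char_poly Q = \prod_(k < n.+1) ('X - (lam k)%:P) ->
  exists2 N : 'M[C]_n.+1, forall x : 'rV_n.+1, sqnorm (x *m N^T) = sqnorm x &
    forall v : 'rV_n.+1, (map_mx Num.conj v *m Q *m v^T) 0 0
              = \sum_k lam k * `|(v *m N^T) 0 k| ^+ 2.
Proof.
move=> Qherm charQ; have /orthomx_spectralP : Q \is normalmx.
  by apply/normalmxP; rewrite Qherm.
set M := spectralmx Q; set d := spectral_diag Q => QE.
have Mu : M \is unitarymx := spectral_unitarymx Q.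
have charQd : char_poly Q = \prod_(k < n.+1) ('X - (d 0 k)%:P).
  rewrite QE char_poly_similar ?unitarymx_unit // char_poly_trig ?diag_mx_is_trig //.
  by apply: eq_bigr => k _; rewrite mxE eqxx mulr1n.
have [p lamE] : exists p : 'S_n.+1, forall k, lam k = d 0 (p k).
  have /tuple_permP[p lam_d] :
      perm_eq [tuple lam k | k < n.+1] [tuple d 0 k | k < n.+1].
    apply: prod_XsubC_eq; rewrite !big_tuple.
    under eq_bigr do rewrite tnth_mktuple.
    by under [RHS]eq_bigr do rewrite tnth_mktuple; rewrite -charQ -charQd.
  exists p => k; have /val_inj/(congr1 (fun t => tnth t k)) : val _ = val _ := lam_d.
  by rewrite !tnth_mktuple.
have coordE x k : (x *m (row_perm p M)^T) 0 k = (x *m M^T) 0 (p k).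
  by rewrite !mxE; apply: eq_bigr => l _; rewrite !mxE.
exists (row_perm p M) => [x | v].
  rewrite -(sqnorm_unitarymx x Mu) /sqnorm [in RHS](reindex_perm p).
  by apply: eq_bigr => k _; rewrite coordE.
have -> : map_mx Num.conj v *m Q *m v^T
          = map_mx Num.conj (v *m M^T) *m diag_mx d *m (v *m M^T)^T.
  by rewrite QE invmx_unitary // map_mxM trmx_mul trmxK !mulmxA.
rewrite diag_form (reindex_perm p); apply: eq_bigr => k _.
by rewrite coordE lamE.
Qed.

End HermitianForms.

Section Phi.
Variable F : fieldType.

Lemma exists_supmx_rank p n (L : 'M[F]_(p, n)) d : (\rank L <= d <= n)%N ->
  exists2 L' : 'M[F]_n, (L <= L')%MS & \rank L' = d.
Proof.
case/andP=> /subnKC <-; rewrite -(genmxE L); move: (d - _)%N => e le_n.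
suff [L' sLL' rkL'] : exists2 L' : 'M[F]_n, (<<L>> <= L')%MS & \rank L' = (\rank <<L>> + e)%N.
  by exists L' => //; rewrite -genmxE.
move: <<L>>%MS le_n => {}L; elim: e L => [|e IH] L le_n.
  by exists L; rewrite ?addn0.
have [i notLi] : exists i, ~~ (row i (1%:M : 'M[F]_n) <= L)%MS.
  apply/existsP; apply: contraTT le_n; rewrite negb_exists => /forallP L1.
  have /eqP rkL : row_full L by rewrite -sub1mx; apply/row_subP => i; apply/negPn.
  by rewrite -ltnNge rkL addnS ltnS leq_addr.
have rk_add : \rank (L + row i 1%:M)%MS = (\rank L).+1.
  apply/eqP; rewrite eqn_leq; apply/andP; split.
    apply: leq_trans (mxrank_adds_leqif L (row i 1%:M)) _.
    by rewrite -[X in (_ <= X)%N]addn1 leq_add2l rank_leq_row.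
  by rewrite (ltn_leqif (mxrank_leqif_sup (addsmxSl _ _))) addsmx_sub submx_refl.
have [|L' sLL' rkL'] := IH (L + row i 1%:M)%MS; first by rewrite rk_add addSnnS.
by exists L'; [exact: submx_trans (addsmxSl _ _) sLL' | rewrite rkL' rk_add addSnnS].
Qed.

Variables (n m : nat) (P : 'I_m -> 'rV[F]_n.+1).

Lemma degZL_le_phiv (L : 'M[F]_n.+1) : (degZL P L <= phiv P (\rank L))%N.
Proof.
have lt_m : (degZL P L < m.+1)%N by rewrite ltnS (leq_trans (max_card _)) ?card_ord.
by apply: (@leq_bigmax_cond _ _ _ (Ordinal lt_m)); apply/asboolP; exists L.
Qed.

Lemma card_le_phiv (S : {set 'I_m}) p (L : 'M[F]_(p, n.+1)) d :
    (forall j, j \in S -> (P j <= L)%MS) -> (\rank L <= d <= n.+1)%N ->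
  (#|S| <= phiv P d)%N.
Proof.
move=> SL /exists_supmx_rank[L' sLL' <-]; apply: leq_trans (degZL_le_phiv L').
apply: subset_leq_card; apply/subsetP => j Sj.
by rewrite inE (submx_trans (SL j Sj)).
Qed.

Lemma phiv_le_m d : (phiv P d <= m)%N.
Proof. by apply/bigmax_leqP => i _; rewrite -ltnS. Qed.

Lemma phiv_mono d : (d <= n)%N -> (phiv P d <= phiv P d.+1)%N.
Proof.
move=> le_dn; apply/bigmax_leqP => i /asboolP[L [rkL <-]].
by apply: (card_le_phiv (L := L)) => [j|]; rewrite ?inE // rkL leqnSn.
Qed.

Lemma phiv_top : phiv P n.+1 = m.
Proof.
apply/eqP; rewrite eqn_leq phiv_le_m -{1}(card_ord m) -cardsT /=.
have := @card_le_phiv [set: 'I_m] n.+1 1%:M n.+1.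
by rewrite mxrank1 leqnn; apply=> // j _; rewrite submx1.
Qed.

Lemma phiv_bot : (forall j, P j != 0) -> phiv P 0 = 0%N.
Proof.
move=> P_neq0; apply/eqP; rewrite -leqn0; apply/bigmax_leqP => i /asboolP[L [/eqP]].
rewrite mxrank_eq0 => /eqP -> <-; rewrite leqn0 cards_eq0; apply/eqP/setP => j.
by rewrite !inE submx0 (negbTE (P_neq0 j)).
Qed.

Lemma sum_phiv_diff k : (forall j, P j != 0) -> (k <= n.+1)%N ->
  (\sum_(0 <= i < k) (phiv P i.+1 - phiv P i) = phiv P k)%N.
Proof.
move=> P_neq0 le_kn; rewrite telescope_sumn_in ?phiv_bot ?subn0 // => i /andP[_ lt_ik].
by apply: phiv_mono; rewrite -ltnS (leq_trans lt_ik).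
Qed.

End Phi.

Lemma ler_prod_majorized (R : numDomainType) n (lam : nat -> R) (a b : nat -> nat) :
    (forall i, (i <= n)%N -> 0 < lam i) ->
    (forall i, (i < n)%N -> lam i <= lam i.+1) ->
    (forall k, (k <= n)%N ->
       \sum_(0 <= i < k.+1) b i <= \sum_(0 <= i < k.+1) a i)%N ->
    (\sum_(0 <= i < n.+1) b i = \sum_(0 <= i < n.+1) a i)%N ->
  \prod_(0 <= i < n.+1) lam i ^+ a i <= \prod_(0 <= i < n.+1) lam i ^+ b i.
Proof.
elim: n lam a b => [|n IH] lam a b lam_gt0 lam_incr le_pre eq_tot.
  by move: eq_tot; rewrite !big_nat1 => ->.
have [le_b0 lam_ge0] : (b 0 <= a 0)%N /\ forall i, (i <= n.+1)%N -> 0 <= lam i.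
  by split=> [|i /lam_gt0/ltW //]; have := le_pre 0%N isT; rewrite !big_nat1.
(* The excess [a 0 - b 0] is moved from [lam 0] to the larger [lam 1]. *)
set d := (a 0 - b 0)%N; pose a' i := (a i.+1 + (i == 0)%N * d)%N.
have sum_a' k : (\sum_(0 <= i < k.+1) a' i = \sum_(0 <= i < k.+1) a i.+1 + d)%N.
  rewrite big_split /=; congr (_ + _)%N.
  by rewrite big_nat_recl //= mul1n big1 ?addn0.
have prod_a' : \prod_(0 <= i < n.+1) lam i.+1 ^+ a' i
               = lam 1%N ^+ d * \prod_(0 <= i < n.+1) lam i.+1 ^+ a i.+1.
  rewrite !big_nat_recl // /a' /= mul1n exprD mulrCA -mulrA; congr (_ * (_ * _)).
  by apply: eq_bigr => i _; rewrite mul0n addn0.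
have IHa : \prod_(0 <= i < n.+1) lam i.+1 ^+ a' i
           <= \prod_(0 <= i < n.+1) lam i.+1 ^+ b i.+1.
  apply: IH => [i le_in | i lt_in | k le_kn |].
  - exact: lam_gt0.
  - exact: lam_incr.
  - by rewrite sum_a'; have := le_pre k.+1 le_kn; rewrite !big_nat_recl //; lia.
  - by rewrite sum_a'; move: eq_tot; rewrite !big_nat_recl //; lia.
have prod_ge0 e : 0 <= \prod_(0 <= i < n.+1) lam i.+1 ^+ e i.
  by rewrite big_seq prodr_ge0 // => i; rewrite mem_index_iota => /andP[_ /lam_ge0/exprn_ge0].
rewrite [leLHS]big_nat_recl // [leRHS]big_nat_recl // -(subnKC le_b0) -/d.
rewrite exprD -mulrA ler_wpM2l ?exprn_ge0 ?lam_ge0 //.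
apply: le_trans IHa; rewrite prod_a' ler_wpM2r ?prod_ge0 //.
by rewrite lerXn2r ?nnegrE ?lam_ge0 ?lam_incr.
Qed.

Section Multiplicities.
Variables (m : nat) (t : 'I_m -> nat).

Lemma sum_mult_lt k :
  (\sum_(0 <= i < k) \sum_(j < m) (t j == i) = #|[set j | t j < k]|)%N.
Proof.
rewrite exchange_big /= -sum1_card [RHS]big_mkcond /=; apply: eq_bigr => j _.
elim: k => [|k IH]; first by rewrite big_nil inE.
by rewrite big_nat_recr //= IH !inE ltnS; case: ltngtP.
Qed.

Lemma prod_exp_mult (R : comPzRingType) (f : nat -> R) K :
    (forall j, t j < K)%N ->
  \prod_(0 <= i < K) f i ^+ (\sum_(j < m) (t j == i)) = \prod_(j < m) f (t j).
Proof.
move=> t_lt; under eq_bigr do rewrite -prodrXr.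
rewrite exchange_big /=; apply: eq_bigr => j _.
rewrite (big_cat_nat (leq0n (t j)) (ltnW (t_lt j))) (big_ltn (t_lt j)) /= eqxx expr1.
by rewrite !big_nat !big1 ?mul1r ?mulr1 // => i /andP[? ?];
  rewrite (_ : t j == i = false) ?expr0 //; apply/eqP; lia.
Qed.

End Multiplicities.

Lemma ler_prod_threshold (R : numDomainType) n m (lam : nat -> R)
    (a : nat -> nat) (t : 'I_m -> nat) :
    (forall i, (i <= n)%N -> 0 < lam i) ->
    (forall i, (i < n)%N -> lam i <= lam i.+1) ->
    (forall j, t j <= n)%N ->
    (forall k, (k <= n)%N -> #|[set j | t j <= k]| <= \sum_(0 <= i < k.+1) a i)%N ->
    (\sum_(0 <= i < n.+1) a i = m)%N ->
  \prod_(0 <= i < n.+1) lam i ^+ a i <= \prod_(j < m) lam (t j).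
Proof.
move=> lam_gt0 lam_incr t_le le_pre eq_tot.
have t_lt j : (t j < n.+1)%N by rewrite ltnS.
rewrite -(prod_exp_mult _ t_lt); apply: ler_prod_majorized => // [k le_kn|].
  by rewrite sum_mult_lt le_pre.
rewrite sum_mult_lt eq_tot -[RHS](card_ord m) -cardsT.
by apply: eq_card => j; rewrite !inE ltnS t_le.
Qed.

Section TailBound.
Variable C : numClosedFieldType.

Lemma row_free_tail_bound n r k (F : 'M[C]_(r, n)) (N : 'M[C]_n) (e : C) :
    row_free F -> (forall x : 'rV_n, sqnorm (x *m N^T) = sqnorm x) ->
    (k < r)%N -> (k <= n)%N -> (forall l, tail (row l F *m N^T) k <= e) ->
  1 <= 2 ^+ (n + r) * frobenius (pinvmx F) * e.
Proof.
move=> Ffree Niso lt_kr le_kn tail_le; set Y := F *m N^T.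
pose Z : 'M_(r, k) := \matrix_(l, i) Y l (widen_ord le_kn i).
have [a aZ a_neq0] : exists2 a : 'rV_r, a *m Z = 0 & a != 0.
  have /rowV0Pn[a /sub_kermxP aZ a_neq0] : kermx Z != 0.
    by rewrite kermx_eq0 /row_free neq_ltn (leq_ltn_trans (rank_leq_col Z)).
  by exists a.
have aY_head (i : 'I_n) : (i < k)%N -> (a *m Y) 0 i = 0.
  move=> lt_ik; transitivity ((a *m Z) 0 (Ordinal lt_ik)); last by rewrite aZ mxE.
  rewrite [LHS]mxE [RHS]mxE; apply: eq_bigr => l _.
  by rewrite [Z l _]mxE; congr (_ * Y l _); apply: val_inj.
set x := a *m F.
have le_a : sqnorm a <= 2 ^+ n * sqnorm x * frobenius (pinvmx F).
  by rewrite -[a](row_free_inj Ffree (mulmxKpV (submxMl a F))) sqnorm_mulmx_le.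
have le_x : sqnorm x <= 2 ^+ r * sqnorm a * e.
  rewrite -Niso -mulmxA -/Y.
  have -> : sqnorm (a *m Y) = \sum_(i < n | (k <= i)%N) `|(a *m Y) 0 i| ^+ 2.
    rewrite /sqnorm (bigID (fun i : 'I_n => (k <= i)%N)) /= addrC big1 ?add0r //.
    by move=> i; rewrite -ltnNge => /aY_head ->; rewrite normr0 expr0n.
  apply: le_trans (sum_sqr_mulmx_le _ _ _) _; rewrite -mulrA ler_wpM2l ?exprn_ge0 //.
  rewrite /sqnorm mulr_suml ler_sum // => l _; rewrite ler_wpM2l ?exprn_ge0 //.
  apply: le_trans (tail_le l); rewrite -row_mul /tail.
  by under [leRHS]eq_bigr do rewrite mxE.
have a_gt0 : 0 < sqnorm a by rewrite lt_def sqnorm_eq0 a_neq0 sqnorm_ge0.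
rewrite -(ler_pMl _ a_gt0); apply: le_trans le_a _.
have -> : 2 ^+ (n + r) * frobenius (pinvmx F) * e * sqnorm a
          = 2 ^+ n * (2 ^+ r * sqnorm a * e) * frobenius (pinvmx F).
  by rewrite exprD; ring.
by rewrite ler_wpM2r ?frobenius_ge0 // ler_wpM2l ?exprn_ge0.
Qed.

End TailBound.

Section Configuration.
Variables (C : numClosedFieldType) (n m : nat) (P : 'I_m -> 'rV[C]_n.+1).

Definition subfamily r (g : 'I_r -> 'I_m) : 'M[C]_(r, n.+1) := \matrix_(i < r) P (g i).

Definition pinv_bound : C :=
  1 + \sum_(r < n.+2) \sum_(g : {ffun 'I_r -> 'I_m}) frobenius (pinvmx (subfamily g)).

(* Small enough to contradict [row_free_tail_bound] for every free subfamily. *)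
Definition delta : C := (2 ^+ (n.+1 + n.+1).+1 * pinv_bound)^-1.

Lemma pinv_bound_ge1 : 1 <= pinv_bound.
Proof.
by rewrite lerDl; apply: sumr_ge0 => r _; apply: sumr_ge0 => g _; apply: frobenius_ge0.
Qed.

Lemma frobenius_pinvmx_le r (g : 'I_r -> 'I_m) : (r <= n.+1)%N ->
  frobenius (pinvmx (subfamily g)) <= pinv_bound.
Proof.
move=> le_rn; have -> : subfamily g = subfamily (finfun g).
  by apply/matrixP => i l; rewrite !mxE ffunE.
have ge0 r' (g' : {ffun 'I_r' -> 'I_m}) : 0 <= frobenius (pinvmx (subfamily g')).
  exact: frobenius_ge0.
rewrite /pinv_bound (bigD1 (Ordinal (le_rn : (r < n.+2)%N))) //= (bigD1 (finfun g)) //=.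
rewrite [leRHS]addrC -!addrA lerDl !addr_ge0 ?sumr_ge0 // => r' _.
exact: sumr_ge0.
Qed.

Lemma delta_gt0_le1 : 0 < delta /\ delta <= 1.
Proof.
have ge1 : 1 <= 2 ^+ (n.+1 + n.+1).+1 * pinv_bound.
  by rewrite mulr_ege1 ?pinv_bound_ge1 // exprn_ege1 // ler1n.
have gt0 := lt_le_trans ltr01 ge1.
by rewrite invr_gt0 invf_le1 ?gt0.
Qed.

Lemma card_tail_lt_delta (N : 'M[C]_n.+1) k :
    (forall x : 'rV_n.+1, sqnorm (x *m N^T) = sqnorm x) -> (k <= n)%N ->
  (#|[set j | (tail (P j *m N^T) k.+1 < delta)%R]| <= phiv P k.+1)%N.
Proof.
move=> Niso le_kn; set S := [set j | _]; rewrite leqNgt; apply/negP => lt_phi_S.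
pose A : 'M_(#|S|, n.+1) := \matrix_(i < #|S|) P (enum_val i).
have rk_A : (k.+1 < \rank A)%N.
  rewrite ltnNge; apply: contraL lt_phi_S => le_rk; rewrite -leqNgt.
  apply: (card_le_phiv (L := A)) => [j Sj|]; last by rewrite le_rk.
  by rewrite (_ : P j = row (enum_rank_in Sj j) A) ?row_sub // rowK enum_rankK_in.
pose g i := enum_val (maxrankfun A i).
have Fg : subfamily g = rowsub (maxrankfun A) A by apply/matrixP => i l; rewrite !mxE.
have tail_le l : tail (row l (rowsub (maxrankfun A) A) *m N^T) k.+1 <= delta.
  by rewrite -Fg rowK; have := enum_valP (maxrankfun A l); rewrite inE => /ltW.
have := row_free_tail_bound (maxrowsub_free A) Niso rk_A le_kn tail_le.
rewrite -Fg => ge1; suff : 2 ^+ (n.+1 + \rank A) * frobenius (pinvmx (subfamily g)) * delta < 1.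
  by move/(le_lt_trans ge1); rewrite ltxx.
have [d_gt0 _] := delta_gt0_le1; have K_gt0 := lt_le_trans ltr01 pinv_bound_ge1.
apply: le_lt_trans (_ : _ <= 2 ^+ (n.+1 + n.+1) * pinv_bound * delta) _.
  apply: ler_wpM2r; first exact: ltW.
  apply: ler_pM; rewrite ?exprn_ge0 ?frobenius_ge0 //.
    by rewrite ler_eXn2l ?ltr1n // leq_add2l rank_leq_col.
  by rewrite frobenius_pinvmx_le ?rank_leq_col.
have -> : 2 ^+ (n.+1 + n.+1) * pinv_bound * delta = 2^-1.
  by rewrite /delta exprS; field; rewrite ?gt_eqF ?exprn_gt0.
by rewrite invf_lt1 ?ltr1n.
Qed.

End Configuration.

Lemma exists_threshold (C : numDomainType) (f : nat -> C) (d : C) n :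
    (forall k, 0 <= f k) -> 0 < d -> d <= f 0 -> f n.+1 < d ->
  exists2 t, (t <= n)%N & d <= f t /\ f t.+1 < d.
Proof.
move=> f_ge0 d_gt0 le_d0; elim: n => [|n IH] lt_fn; first by exists 0%N.
have [le_dfn | lt_fnd] := boolP (d <= f n.+1); first by exists n.+1.
have [|t le_tn ft] := IH; last by exists t => //; apply: leqW.
by rewrite real_ltNge ?ger0_real // ltW.
Qed.

Section LowerBound.
Variables (C : numClosedFieldType) (n m : nat) (P : 'I_m -> 'rV[C]_n.+1).
Hypothesis P_unit : forall j, sqnorm (P j) = 1.

Lemma prod_weighted_sqnorm_ge (N : 'M[C]_n.+1) (lam : 'I_n.+1 -> C) :
    (forall x : 'rV_n.+1, sqnorm (x *m N^T) = sqnorm x) ->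
    0 < lam ord0 -> (forall k l : 'I_n.+1, (k <= l)%N -> lam k <= lam l) ->
  delta P ^+ m * \prod_(k < n.+1) lam k ^+ (phiv P k.+1 - phiv P k)
    <= \prod_(j < m) \sum_k lam k * `|(P j *m N^T) 0 k| ^+ 2.
Proof.
move=> Niso lam0 lam_incr; have [d_gt0 d_le1] := delta_gt0_le1 P.
have lam_gt0 k : 0 < lam k by apply: lt_le_trans lam0 (lam_incr ord0 k (leq0n k)).
pose lamN i := lam (inord i).
have /fin_all_exists2[t t_le t_thr] j : exists2 t, (t <= n)%N &
    delta P <= tail (P j *m N^T) t /\ tail (P j *m N^T) t.+1 < delta P.
  apply: exists_threshold => // [k||]; first exact: tail_ge0.
    by rewrite tail0 Niso P_unit.
  by rewrite tail_size.
have P_neq0 j : P j != 0 by rewrite -sqnorm_eq0 P_unit oner_eq0.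
have tail_ge j : delta P * lamN (t j) <= \sum_k lam k * `|(P j *m N^T) 0 k| ^+ 2.
  have := @weighted_sum_ge_tail _ _ lam (P j *m N^T) (inord (t j)).
  move=> /(_ (fun k => ltW (lam_gt0 k)) lam_incr); apply: le_trans.
  rewrite mulrC; apply: ler_wpM2l; first exact/ltW/lam_gt0.
  by rewrite inordK ?ltnS ?t_le //; case: (t_thr j).
apply: le_trans (_ : delta P ^+ m * \prod_(j < m) lamN (t j) <= _).
  apply: ler_wpM2l; first by rewrite exprn_ge0 ?ltW.
  have -> : \prod_(k < n.+1) lam k ^+ (phiv P k.+1 - phiv P k)
            = \prod_(0 <= i < n.+1) lamN i ^+ (phiv P i.+1 - phiv P i).
    by rewrite big_mkord; apply: eq_bigr => k _; rewrite /lamN inord_val.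
  apply: ler_prod_threshold => // [i _ | i lt_in | k le_kn |]; first exact: lam_gt0.
  - by apply: lam_incr; rewrite !inordK // ltnS ltnW.
  - rewrite sum_phiv_diff // ?ltnS // (leq_trans _ (card_tail_lt_delta P Niso le_kn)) //.
    apply/subset_leq_card/subsetP => j; rewrite !inE => le_tk.
    by case: (t_thr j) => _; apply: le_lt_trans; apply: tail_decr.
  - by rewrite sum_phiv_diff // phiv_top.
have -> : delta P ^+ m = \prod_(j < m) delta P by rewrite prodr_const card_ord.
rewrite -big_split /=.
by apply: ler_prod => j _; rewrite tail_ge mulr_ge0 ?ltW ?lam_gt0.
Qed.

End LowerBound.

Theorem mainTheorem1 (R : realType) (n m : nat)
    (P : 'I_m -> 'rV[R[i]]_n.+1)
    (hnorm : forall j, (map_mx Num.conj (P j) *m (P j)^T) 0 0 = 1) :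
  exists c : R, 0 < c /\
    forall (Q : 'M[R[i]]_n.+1) (lam : 'I_n.+1 -> R),
      map_mx Num.conj Q^T = Q ->
      (forall v : 'rV[R[i]]_n.+1, v != 0 -> 0 < herm_form Q v) ->
      char_poly Q = \prod_(k < n.+1) ('X - ((lam k)%:C)%C%:P) ->
      0 < lam ord0 ->
      (forall k l : 'I_n.+1, (k <= l)%N -> lam k <= lam l) ->
      ((c * \prod_(k < n.+1) lam k ^+ (phiv P k.+1 - phiv P k)%N)%:C)%C
        <= \prod_(j < m) herm_form Q (P j).
Proof.
have P_unit j : sqnorm (P j) = 1 by rewrite sqnormE hnorm.
have [d_gt0 _] := delta_gt0_le1 P.
have dE : delta P = ((complex.Re (delta P))%:C)%C.
  by rewrite [LHS]complexE (ger0_Im (ltW d_gt0)) mulr0 addr0.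
have Re_gt0 : 0 < complex.Re (delta P) by rewrite -ltcR -dE.
exists (complex.Re (delta P) ^+ m); split; first exact: exprn_gt0.
move=> Q lam Qherm _ charQ lam0 lam_incr.
have [N Niso formE] := hermitian_eigen_coords Qherm charQ.
(* [formE] only matches [herm_form] up to conversion of the structure instances. *)
have formP j : herm_form Q (P j) = \sum_k (lam k)%:C%C * `|(P j *m N^T) 0 k| ^+ 2.
  exact: formE.
rewrite (eq_bigr _ (fun j _ => formP j)).
apply: le_trans (prod_weighted_sqnorm_ge P_unit Niso (lam := fun k => (lam k)%:C%C) _ _).
- rewrite rmorphM rmorphXn rmorph_prod dE.
  apply: ler_wpM2l; first by rewrite exprn_ge0 // ler0c ltW.
  by under eq_bigr do rewrite rmorphXn.
- by rewrite ltcR.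
- by move=> k l /lam_incr; rewrite lecR.
Qed.
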